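(* Assume the network $\Sigma$ is well-posed, let $\mathcal{A}\subset X$ be nonempty and closed, and assume $f:X\times U\to X$ is $\mathcal{K}$-bounded with respect to $\mathcal{A}$, i.e. there are $\kappa_1,\kappa_2\in\mathcal{K}$ with $|f(\xi,\mu)|_{\mathcal{A}}\le\kappa_1(|\xi|_{\mathcal{A}})+\kappa_2(|\mu|_\infty)$ for all $\xi\in X$, $\mu\in U$. If there exists a finite-step ISS Lyapunov function for $\Sigma$ with respect to $\mathcal{A}$, then $\Sigma$ is ISS with respect to $\mathcal{A}$. Additionally, if $\kappa_1$ is linear, the existence of a finite-step eISS Lyapunov function for $\Sigma$ with respect to $\mathcal{A}$ implies that $\Sigma$ is eISS with respect to $\mathcal{A}$.
   Context: Setting: for each $i\in\mathbb{N}$ fix positive integers $n_i,p_i$, norms on $\mathbb{R}^{n_i},\mathbb{R}^{p_i}$, a finite $I_i\subset\mathbb{N}\setminus\{i\}$ with each $\{j: i\in I_j\}$ finite, and continuous $f_i:\mathbb{R}^{n_i}\times\prod_{j\in I_i}\mathbb{R}^{n_j}\times\mathbb{R}^{p_i}\to\mathbb{R}^{n_i}$. $X$ (resp. $U$) is the space of sequences $(x_i)$, $x_i\in\mathbb{R}^{n_i}$ (resp. $(u_i)$, $u_i\in\mathbb{R}^{p_i}$) with finite sup-norm $|\cdot|_\infty$; $X_E=\prod_i\mathbb{R}^{n_i}$; $f(x,u)_i=f_i(x_i,(x_j)_{j\in I_i},u_i)$; network $\Sigma$: $x(k+1)=f(x(k),u(k))$. $\Sigma$ is well-posed if $f(X\times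 U)\subset X$. $\mathcal{U}$: sequences $u:\mathbb{N}_0\to U$ with $\|u\|_\infty=\sup_k|u(k)|_\infty<\infty$; $x(k,\xi,u)$ the solution with $x(0)=\xi$. $|x|_{\mathcal{A}}=\inf_{y\in\mathcal{A}}|x-y|_\infty$. ISS w.r.t. $\mathcal{A}$: there are $\beta\in\mathcal{KL}$, $\gamma\in\mathcal{K}$ with $|x(k,\xi,u)|_{\mathcal{A}}\le\max\{\beta(|\xi|_{\mathcal{A}},k),\gamma(\|u\|_\infty)\}$ for all $\xi\in X,u\in\mathcal{U},k\in\mathbb{N}_0$; eISS: additionally $\beta(r,k)=C\rho^kr$ with $C\ge1,\rho\in[0,1)$. A continuous $V:X\to[0,\infty)$ is a finite-step ISS Lyapunov function for $\Sigma$ w.r.t. $\mathcal{A}$ if there exist $M\in\mathbb{N}$, $\underline\omega,\overline\omega,\alpha\in\mathcal{K}_\infty$ with $\alpha(s)<s$ for all $s>0$, and $\gamma\in\mathcal{K}$ such that for all $\xi\in X$, $u\in\mathcal{U}$: $\underline\omega(|\xi|_{\mathcal{A}})\le V(\xi)\le\overline\omega(|\xi|_{\mathcal{A}})$ and $V(x(M,\xi,u))\le\max\{\alpha(V(\xi)),\gamma(\|u\|_\infty)\}$. It is a finite-step eISS Lyapunov function if there exist $M\in\mathbb{N}$, constants $\underline w,\overline w,b>0$, $\kappa\in[0,1)$, $\gamma\in\mathcal{K}$ with $\underline w|\xi|_{\mathcal{A}}^b\le V(\xi)\le\overline w|\xi|_{\mathcal{A}}^b$ and $V(x(M,\xi,u))\le\max\{\kappa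 V(\xi),\gamma(\|u\|_\infty)\}$ for all $\xi\in X,u\in\mathcal{U}$. Comparison classes $\mathcal{K},\mathcal{K}_\infty,\mathcal{KL}$ are standard. *)

From HB Require Import structures.
From mathcomp Require Import all_boot all_order all_algebra.
From mathcomp Require Import all_classical all_reals all_analysis.
Set Implicit Arguments. Unset Strict Implicit. Unset Printing Implicit Defensive.
Import Order.TTheory GRing.Theory Num.Theory.
Import numFieldNormedType.Exports.
Local Open Scope classical_set_scope.
Local Open Scope ring_scope.

Section Defs.
Variable R : realType.

Definition classK (g : R -> R) : Prop :=
  [/\ g 0 = 0,
      {within `[0, +oo[%classic, continuous g} &
      (forall s t, 0 <= s -> s < t -> g s < g t)].

Definition classKinf (g : R -> R) : Prop :=
  classK g /\ (forall M : R, exists s, 0 <= s /\ M < g s).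

Definition classKL (b : R -> R -> R) : Prop :=
  (forall t, 0 <= t -> classK (fun r => b r t)) /\
  (forall r, 0 <= r ->
     (forall s t, 0 <= s -> s <= t -> b r t <= b r s) /\
     (b r t @[t --> +oo] --> 0)).

Definition is_norm (m : nat) (N : 'rV[R]_m -> R) : Prop :=
  [/\ forall x, N x = 0 -> x = 0,
      forall (a : R) x, N (a *: x) = `|a| * N x &
      forall x y, N (x + y) <= N x + N y].

Record network := Network {
  nx : nat -> nat;
  np : nat -> nat;
  normx : forall i, 'rV[R]_(nx i) -> R;
  normu : forall i, 'rV[R]_(np i) -> R;
  Iset : nat -> seq nat;                            (* I_i, a finite set listed without repetition *)
  fi : forall i, 'rV[R]_(nx i) ->
         (forall k : 'I_(size (Iset i)), 'rV[R]_(nx (nth 0%N (Iset i) k))) ->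
         'rV[R]_(np i) -> 'rV[R]_(nx i)
}.
Arguments normx n i _ : clear implicits.
Arguments normu n i _ : clear implicits.
Arguments fi n i _ _ _ : clear implicits.

Variable S : network.

Definition XE := forall i, 'rV[R]_(nx S i).
Definition UE := forall i, 'rV[R]_(np S i).

Definition subX (x y : XE) : XE := fun i => x i - y i.

Definition fi_continuous (i : nat) : Prop :=
  forall (xi : 'rV[R]_(nx S i)) (xs : forall k : 'I_(size (Iset S i)), 'rV[R]_(nx S (nth 0%N (Iset S i) k))) (ui : 'rV[R]_(np S i))
         (eps : R), 0 < eps -> exists2 delta : R, 0 < delta &
    forall (yi : 'rV[R]_(nx S i)) (ys : forall k : 'I_(size (Iset S i)), 'rV[R]_(nx S (nth 0%N (Iset S i) k))) (vi : 'rV[R]_(np S i)),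
      normx S i (xi - yi) < delta ->
      (forall k : 'I_(size (Iset S i)), normx S (nth 0%N (Iset S i) k) (xs k - ys k) < delta) ->
      normu S i (ui - vi) < delta ->
      normx S i (fi S i xi xs ui - fi S i yi ys vi) < eps.

Definition network_ok : Prop :=
  forall i,
    [/\ (0 < nx S i)%N /\ (0 < np S i)%N,
        is_norm (normx S i) /\ is_norm (normu S i),
        uniq (Iset S i) /\ i \notin Iset S i,
        (exists m, forall j, i \in Iset S j -> (j < m)%N) &
        fi_continuous i].

Definition inX (x : XE) : Prop := exists M : R, forall i, normx S i (x i) <= M.
Definition inU (u : UE) : Prop := exists M : R, forall i, normu S i (u i) <= M.
Definition supX (x : XE) : R := sup (range (fun i => normx S i (x i))).
Definition supU (u : UE) : R := sup (range (fun i => normu S i (u i))).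

Definition fnet (x : XE) (u : UE) : XE :=
  fun i => fi S i (x i) (fun k => x (nth 0%N (Iset S i) k)) (u i).

Definition well_posed : Prop := forall x u, inX x -> inU u -> inX (fnet x u).

Definition inUseq (u : nat -> UE) : Prop :=
  (forall k, inU (u k)) /\ exists M : R, forall k, supU (u k) <= M.
Definition normUseq (u : nat -> UE) : R := sup (range (fun k => supU (u k))).

Fixpoint traj (k : nat) (xi : XE) (u : nat -> UE) : XE :=
  match k with
  | 0%N => xi
  | k'.+1 => fnet (traj k' xi u) (u k')
  end.

Definition distA (A : set XE) (x : XE) : R := inf [set supX (subX x y) | y in A].

Definition closedX (A : set XE) : Prop :=
  forall x, inX x ->
    (forall eps : R, 0 < eps -> exists2 y, A y & supX (subX x y) < eps) -> A x.

Definition K_bounded (A : set XE) (k1 k2 : R -> R) : Prop :=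
  forall xi mu, inX xi -> inU mu ->
    distA A (fnet xi mu) <= k1 (distA A xi) + k2 (supU mu).

Definition ISS (A : set XE) : Prop :=
  exists b g, classKL b /\ classK g /\
    forall xi u k, inX xi -> inUseq u ->
      distA A (traj k xi u) <= Num.max (b (distA A xi) k%:R) (g (normUseq u)).

Definition eISS (A : set XE) : Prop :=
  exists (C rho : R) g, 1 <= C /\ 0 <= rho < 1 /\ classK g /\
    forall xi u k, inX xi -> inUseq u ->
      distA A (traj k xi u) <= Num.max (C * rho ^+ k * distA A xi) (g (normUseq u)).

Definition V_continuous (V : XE -> R) : Prop :=
  forall x (eps : R), inX x -> 0 < eps -> exists2 delta : R, 0 < delta &
    forall y, inX y -> supX (subX x y) < delta -> `|V x - V y| < eps.

Definition fs_ISS_LF (A : set XE) (V : XE -> R) : Prop :=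
  V_continuous V /\ (forall x, inX x -> 0 <= V x) /\
  exists (M : nat) wl wu a g,
    [/\ (0 < M)%N, classKinf wl /\ classKinf wu, classKinf a /\
        (forall s, 0 < s -> a s < s), classK g &
        (forall xi, inX xi -> wl (distA A xi) <= V xi <= wu (distA A xi)) /\
        forall xi u, inX xi -> inUseq u ->
          V (traj M xi u) <= Num.max (a (V xi)) (g (normUseq u))].

Definition fs_eISS_LF (A : set XE) (V : XE -> R) : Prop :=
  V_continuous V /\ (forall x, inX x -> 0 <= V x) /\
  exists (M : nat) (wl wu b kappa : R) g,
    [/\ (0 < M)%N, 0 < wl /\ 0 < wu /\ 0 < b, 0 <= kappa < 1, classK g &
        (forall xi, inX xi -> wl * (distA A xi) `^ b <= V xi <= wu * (distA A xi) `^ b) /\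
        forall xi u, inX xi -> inUseq u ->
          V (traj M xi u) <= Num.max (kappa * V xi) (g (normUseq u))].

End Defs.

(* Along a trajectory the distance d_j to A obeys d_(j+1) <= k1 d_j + k2 |u|, so over
   at most M steps it stays below Theta (max d_0 |u|), where Theta is the M-th iterate
   of z + k1 z + k2 z (below (c + 1)^M (d_0 + k2 |u|) when k1 is linear).  At the
   multiples of M the Lyapunov function decays, V (x (q M)) <= max (a^q (V xi)) (g |u|),
   and the sandwich bounds turn this into a bound on d_(q M) in terms of d_0.  Writing
   k = q M + r with r < M and chaining the two estimates gives the ISS bound with
   beta r t = Theta (h (a^(floor (t / M)) (wu r))), h the inverse of wl; when a is the
   linear map kappa * _, the same chaining yields C rho^k d_0, where rho^M = kappa'^(1/b)
   for a rate kappa' in (kappa, 1). *)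

From mathcomp Require Import all_boot all_order all_algebra.
From mathcomp Require Import all_classical all_reals all_analysis.
From mathcomp Require Import ring lra.
Import Order.TTheory GRing.Theory Num.Theory.
Import numFieldNormedType.Exports.
Local Open Scope classical_set_scope.
Local Open Scope ring_scope.

Section ComparisonFunctions.
Context {R : realType}.
Implicit Types (f g w : R -> R) (s t : R).

Definition continuous_on_ge0 f := forall s, 0 <= s -> forall e, 0 < e ->
  exists2 d, 0 < d & forall t, 0 <= t -> `|t - s| < d -> `|f t - f s| < e.

Lemma within_ge0_continuousP f :
  {within `[0, +oo[, continuous f} <-> continuous_on_ge0 f.
Proof.
split.
- move=> /subspace_continuousP fc s s0 e e0.
  have /cvgrPdist_lt /(_ e e0) : f x @[x --> within `[0, +oo[ (nbhs s)] --> f s.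
    by apply: fc; rewrite /= in_itv /= s0.
  rewrite near_withinE /= => /nbhs_ballP [d d0 fd].
  exists d => // t t0 ts; rewrite distrC; apply: fd; last by rewrite /= in_itv /= t0.
  by rewrite /ball /= distrC.
- move=> fc; apply/subspace_continuousP => s; rewrite /= in_itv /= andbT => s0.
  apply/cvgrPdist_lt => e e0; have [d d0 fd] := fc s s0 e e0.
  rewrite near_withinE; apply/nbhs_ballP; exists d => // t /= ts.
  rewrite in_itv /= andbT => t0; rewrite distrC; apply: fd => //.
  by rewrite distrC.
Qed.

Lemma classKP f : classK f <->
  [/\ f 0 = 0, continuous_on_ge0 f & forall s t, 0 <= s -> s < t -> f s < f t].
Proof. by split=> -[f0 fc finc]; split => //; apply/within_ge0_continuousP. Qed.

Lemma classK_le {f s t} : classK f -> 0 <= s -> s <= t -> f s <= f t.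
Proof.
move=> [_ _ finc] s0; rewrite le_eqVlt => /orP[/eqP-> //|st].
exact/ltW/finc.
Qed.

Lemma classK_ge0 {f s} : classK f -> 0 <= s -> 0 <= f s.
Proof. by move=> fK s0; have := classK_le fK (lexx 0) s0; case: fK => ->. Qed.

Lemma classK_max {f s t} : classK f -> 0 <= s -> 0 <= t ->
  f (Num.max s t) = Num.max (f s) (f t).
Proof.
move=> fK s0 t0; case: (leP s t) => st.
- by rewrite !max_r // classK_le.
- by rewrite !max_l // classK_le // ltW.
Qed.

Lemma classK_le_id {f} : classK f -> (forall s, 0 < s -> f s < s) ->
  forall s, 0 <= s -> f s <= s.
Proof.
move=> [f0 _ _] flt s; rewrite le_eqVlt => /orP[/eqP<-|/flt/ltW//].
by rewrite f0.
Qed.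

Lemma classK_id : classK (fun s : R => s).
Proof. by apply/classKP; split => // s _ e e0; exists e. Qed.

Lemma classK_comp {f g} : classK f -> classK g -> classK (fun s => f (g s)).
Proof.
move=> /classKP[f0 fc finc] gK; have /classKP[g0 gc ginc] := gK.
apply/classKP; split; first by rewrite g0 f0.
- move=> s s0 e e0.
  have [d1 d10 fd1] := fc (g s) (classK_ge0 gK s0) e e0.
  have [d2 d20 gd2] := gc s s0 d1 d10.
  exists d2 => // t t0 ts; apply: fd1; first exact: classK_ge0 gK t0.
  exact: gd2.
- by move=> s t s0 st; apply: finc; [exact: classK_ge0 gK s0 | exact: ginc].
Qed.

Lemma classK_add {f g} : classK f -> classK g -> classK (fun s => f s + g s).
Proof.
move=> /classKP[f0 fc finc] /classKP[g0 gc ginc].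
apply/classKP; split; first by rewrite f0 g0 addr0.
- move=> s s0 e e0; have e20 : 0 < e / 2 by rewrite divr_gt0.
  have [d1 d10 fd1] := fc s s0 _ e20; have [d2 d20 gd2] := gc s s0 _ e20.
  exists (Num.min d1 d2); first by rewrite lt_min d10 d20.
  move=> t t0; rewrite lt_min => /andP[t1 t2].
  have := fd1 t t0 t1; have := gd2 t t0 t2.
  rewrite (_ : f t + g t - _ = (f t - f s) + (g t - g s)); last by ring.
  move=> gts fts; apply: le_lt_trans (ler_normD _ _) _.
  by rewrite (splitr e) ltrD.
- by move=> s t s0 st; apply: ltrD; [exact: finc | exact: ginc].
Qed.

Lemma classK_scale {c f} : 0 < c -> classK f -> classK (fun s => c * f s).
Proof.
move=> c0 /classKP[f0 fc finc]; apply/classKP; split; first by rewrite f0 mulr0.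
- move=> s s0 e e0; have [d d0 fd] := fc s s0 (e / c) (divr_gt0 e0 c0).
  exists d => // t t0 ts; rewrite -mulrBr normrM gtr0_norm //.
  by rewrite -ltr_pdivlMl // mulrC; apply: fd.
- by move=> s t s0 st; rewrite ltr_pM2l //; apply: finc.
Qed.

Lemma classK_iter {f} n : classK f -> classK (iter n f).
Proof.
by move=> fK; elim: n => [|n IHn]; [exact: classK_id | exact: classK_comp fK IHn].
Qed.

Lemma increasing_surjective_continuous f :
  (forall s t, 0 <= s -> s < t -> f s < f t) ->
  (forall s, 0 <= s -> 0 <= f s) ->
  (forall y, 0 <= y -> exists2 x, 0 <= x & f x = y) -> continuous_on_ge0 f.
Proof.
move=> finc fge0 fsurj s s0 e e0.
have ltf x y : 0 <= y -> f x < f y -> x < y.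
  move=> y0; apply: contraTT; rewrite -!leNgt le_eqVlt => /orP[/eqP-> //|yx].
  exact/ltW/finc.
have fs0 := fge0 s s0.
have [x2 x20 fx2] : exists2 x, 0 <= x & f x = f s + e / 2 by apply: fsurj; lra.
have sx2 : s < x2 by apply: ltf => //; rewrite fx2; lra.
case: (leP (e / 2) (f s)) => hfs.
- have [x1 x10 fx1] : exists2 x, 0 <= x & f x = f s - e / 2 by apply: fsurj; lra.
  have x1s : x1 < s by apply: ltf => //; rewrite fx1; lra.
  exists (Num.min (x2 - s) (s - x1)); first by rewrite lt_min !subr_gt0 sx2 x1s.
  move=> t t0; rewrite lt_min !ltr_norml => /andP[/andP[? ?] /andP[? ?]].
  have tx2 : t < x2 by lra.
  have x1t : x1 < t by lra.
  by have := finc _ _ t0 tx2; have := finc _ _ x10 x1t; rewrite fx1 fx2; lra.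
- exists (x2 - s); first by rewrite subr_gt0.
  move=> t t0; rewrite ltr_norml => /andP[? ?].
  have tx2 : t < x2 by lra.
  by have := finc _ _ t0 tx2; have := fge0 t t0; rewrite fx2 ltr_norml; lra.
Qed.

Lemma classKinf_inverse {w} : classKinf w ->
  exists h, classK h /\ forall s, 0 <= s -> h (w s) = s.
Proof.
move=> [wK wunb]; have [w0 wc winc] := wK.
have wsurj y : 0 <= y -> exists2 x, 0 <= x & w x = y.
  move=> y0; have [s [s0 ys]] := wunb y.
  have ws : {within `[0, s], continuous w}.
    apply: continuous_subspaceW wc.
    by move=> x /=; rewrite !in_itv /= => /andP[->].
  have [|x] := IVT (v := y) s0 ws.
    by rewrite w0 min_l ?max_r ?y0 ?(ltW ys) ?(classK_ge0 wK s0).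
  by rewrite in_itv /= => /andP[x0 _] wx; exists x.
have [h hP] : {h : R -> R & forall y, 0 <= y -> 0 <= h y /\ w (h y) = y}.
  apply: (@choice _ _ (fun y x => 0 <= y -> 0 <= x /\ w x = y)) => y.
  by case: (leP 0 y) => [/wsurj[x x0 wx]|]; [exists x | exists 0].
have hw s : 0 <= s -> h (w s) = s.
  move=> s0; have [hws0 whws] := hP _ (classK_ge0 wK s0).
  apply/eqP; rewrite eq_le !leNgt; apply/andP; split; apply/negP => lt.
  - by have := winc _ _ s0 lt; rewrite whws ltxx.
  - by have := winc _ _ hws0 lt; rewrite whws ltxx.
have hinc s t : 0 <= s -> s < t -> h s < h t.
  move=> s0 st; have t0 := le_trans s0 (ltW st).
  have [hs0 whs] := hP s s0; have [ht0 wht] := hP t t0.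
  rewrite ltNge; apply/negP => /(classK_le wK ht0); rewrite whs wht; lra.
exists h; split => //; apply/classKP; split => //; first by rewrite -{1}w0 hw.
apply: increasing_surjective_continuous => //; first by move=> s /hP[].
by move=> y y0; exists (w y); [exact: classK_ge0 | exact: hw].
Qed.

Lemma classK_powR {p} : 0 < p -> classK (fun s : R => s `^ p).
Proof.
move=> p0; have pinc s t : 0 <= s -> s < t -> s `^ p < t `^ p.
  by move=> s0 st; apply: gt0_ltr_powR; rewrite // nnegrE // (le_trans s0 (ltW st)).
apply/classKP; split => //; first by rewrite powR0 // gt_eqF.
apply: increasing_surjective_continuous => // [s _|y y0]; first exact: powR_ge0.
exists (y `^ p^-1); first exact: powR_ge0.
by rewrite -powRrM mulVf ?gt_eqF // powRr1.
Qed.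

End ComparisonFunctions.

Section Iterates.
Context {R : realType}.
Implicit Types (f a : R -> R) (s v e : R).

Lemma iter_ge0 {f v} n : classK f -> 0 <= v -> 0 <= iter n f v.
Proof. by move=> fK v0; elim: n => //= n IHn; apply: classK_ge0. Qed.

Lemma iter_nonincreasing {m n a v} : classK a -> (forall s, 0 <= s -> a s <= s) ->
  0 <= v -> (m <= n)%N -> iter n a v <= iter m a v.
Proof.
move=> aK a_le v0 mn; rewrite -(subnK mn) iterD.
have itm0 := iter_ge0 m aK v0.
elim: (n - m)%N => //= k IHk; apply: le_trans IHk.
exact/a_le/iter_ge0.
Qed.

Lemma iter_nondecreasing {m n f v} : classK f -> (forall s, 0 <= s -> s <= f s) ->
  0 <= v -> (m <= n)%N -> iter m f v <= iter n f v.
Proof.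
move=> fK f_ge v0 mn; rewrite -(subnK mn) iterD.
have itm0 := iter_ge0 m fK v0.
elim: (n - m)%N => //= k IHk; apply: le_trans IHk _.
exact/f_ge/iter_ge0.
Qed.

(* The infimum of the orbit is a fixed point of [a] by continuity, hence 0. *)
Lemma exists_iter_lt {a v e} : classK a -> (forall s, 0 < s -> a s < s) ->
  0 <= v -> 0 < e -> exists n, iter n a v < e.
Proof.
move=> aK a_lt v0 e0; have /classKP[_ ac _] := aK.
set E := range (fun n => iter n a v).
have Einf : has_inf E.
  by split; [exists v, 0%N | exists 0 => _ [n _ <-]; apply: iter_ge0].
have inf_ge0 : 0 <= inf E by apply: lb_le_inf Einf.1 _ => _ [n _ <-]; apply: iter_ge0.
suff inf0 : inf E = 0.
  by have [_ [n _ <-]] := inf_adherent e0 Einf; rewrite inf0 add0r; exists n.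
apply/eqP; rewrite eq_le inf_ge0 andbT leNgt; apply/negP => inf_gt0.
have gap : 0 < inf E - a (inf E) by rewrite subr_gt0 a_lt.
have [d d0 ad] := ac _ inf_ge0 _ gap.
have [_ [n _ <-] itn] := inf_adherent d0 Einf.
have le_itn : inf E <= iter n a v by apply: (ge_inf Einf.2); exists n.
have le_itSn : inf E <= iter n.+1 a v by apply: (ge_inf Einf.2); exists n.+1.
have := ad _ (iter_ge0 n aK v0); rewrite iterS in le_itSn.
by rewrite !ltr_norml; lra.
Qed.

Lemma classKL_iter_floor (M : nat) F a w : (0 < M)%N ->
  classK F -> classK a -> (forall s, 0 < s -> a s < s) -> classK w ->
  classKL (fun r t => F (iter (Num.truncn t %/ M) a (w r))).
Proof.
move=> M0 FK aK a_lt wK; have a_le := classK_le_id aK a_lt.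
split=> [t _|r r0]; first exact: classK_comp FK (classK_comp (classK_iter _ aK) wK).
have wr0 := classK_ge0 wK r0.
split=> [s t s0 st|].
  apply: classK_le FK (iter_ge0 _ aK wr0) _.
  by apply: iter_nonincreasing => //; apply/leq_div2r/le_truncn.
apply/cvgrPdist_lt => e e0; have /classKP[F0 Fc _] := FK.
have [d d0 Fd] := Fc 0 (lexx 0) e e0.
have [N itN] := exists_iter_lt aK a_lt wr0 d0.
exists (N * M)%:R; split; first by rewrite realE ler0n.
move=> t NMt; have t0 : 0 <= t by apply: le_trans (ltW NMt).
have N_le : (N <= Num.truncn t %/ M)%N.
  by rewrite leq_divRL // truncn_ge_nat // ltW.
have it0 := iter_ge0 (Num.truncn t %/ M) aK wr0.
have := Fd _ it0; rewrite subr0 ger0_norm // F0 subr0 sub0r normrN.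
rewrite ger0_norm ?(classK_ge0 FK it0) //; apply.
exact: le_lt_trans (iter_nonincreasing aK a_le wr0 N_le) itN.
Qed.

Lemma iter_bound_of_step (d : nat -> R) {k1 k2 W} :
  classK k1 -> classK k2 -> 0 <= W -> (forall j, 0 <= d j) ->
  (forall j, d j.+1 <= k1 (d j) + k2 W) ->
  forall j, d j <= iter j (fun z => z + k1 z + k2 z) (Num.max (d 0%N) W).
Proof.
move=> k1K k2K W0 d0 d_step.
have thK : classK (fun z => z + k1 z + k2 z).
  exact: classK_add (classK_add classK_id k1K) k2K.
have th_ge s : 0 <= s -> s <= s + k1 s + k2 s.
  by move=> s0; have := classK_ge0 k1K s0; have := classK_ge0 k2K s0; lra.
have m0 : 0 <= Num.max (d 0%N) W by rewrite le_max d0.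
elim=> [|j IHj]; first by rewrite le_max lexx.
rewrite iterS; set y := iter j _ _ in IHj *.
have y0 : 0 <= y := iter_ge0 j thK m0.
have Wy : W <= y.
  apply: le_trans (iter_nondecreasing thK th_ge m0 (leq0n j)).
  by rewrite le_max lexx orbT.
apply: le_trans (d_step j) _.
have := classK_le k1K (d0 j) IHj; have := classK_le k2K W0 Wy.
have := classK_ge0 k1K y0; have := classK_ge0 k2K y0; lra.
Qed.

Lemma expn_bound_of_linear_step (d : nat -> R) {c K} :
  0 <= c -> 0 <= K -> (forall j, 0 <= d j) ->
  (forall j, d j.+1 <= c * d j + K) ->
  forall j, d j <= (c + 1) ^+ j * (d 0%N + K).
Proof.
move=> c0 K0 d0 d_step; elim=> [|j IHj]; first by rewrite expr0 mul1r lerDl.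
apply: le_trans (d_step j) _; rewrite exprS.
have c1j : 1 <= (c + 1) ^+ j by apply: exprn_ege1; lra.
have dK0 : 0 <= d 0%N + K by have := d0 0%N; lra.
have : K <= (c + 1) ^+ j * (d 0%N + K).
  by apply: le_trans (ler_peMl dK0 c1j); rewrite lerDr.
have : c * d j <= c * ((c + 1) ^+ j * (d 0%N + K)) by apply: ler_wpM2l.
nra.
Qed.

End Iterates.

Section RealBounds.
Context {R : realType}.

Lemma max_max_le_maxD (x y z : R) : 0 <= y -> 0 <= z ->
  Num.max (Num.max x y) z <= Num.max x (y + z).
Proof. by move=> y0 z0; rewrite !ge_max !le_max lexx /= lerDl z0 lerDr y0 !orbT. Qed.

Lemma maxD_le_max2 (x : R) {y z : R} : 0 <= y -> 0 <= z ->
  Num.max x y + z <= Num.max (2 * x) (2 * (y + z)).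
Proof.
move=> y0 z0; rewrite le_max; case: (leP x y) => [xy|yx].
  by apply/orP; right; lra.
case: (leP z x) => zx; apply/orP; [left|right]; lra.
Qed.

Lemma exists_rate_root {kp b : R} {M : nat} : 0 < kp < 1 -> 0 < b -> (0 < M)%N ->
  exists2 rho : R, 0 < rho < 1 & rho ^+ M = kp `^ b^-1.
Proof.
move=> /andP[kp0 kp1] b0 M0; set r := kp `^ b^-1.
have r1 : r < 1.
  have bV0 : 0 < b^-1 by rewrite invr_gt0.
  have := @gt0_ltr_powR R _ bV0 kp 1; rewrite /= powR1.
  by apply; rewrite ?nnegrE ?ltW.
have r0 : 0 < r by apply: powR_gt0.
have rhoM : (r `^ M%:R^-1) ^+ M = r.
  by rewrite -powR_mulrn ?powR_ge0 // -powRrM mulVf ?powRr1 ?ltW // pnatr_eq0 -lt0n.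
exists (r `^ M%:R^-1) => //; rewrite powR_gt0 //=.
by apply: contraTT r1; rewrite -!leNgt => rho1; rewrite -[X in _ <= X]rhoM exprn_ege1.
Qed.

Lemma le_root_max {wl wu b kp D d0 y : R} {q : nat} :
  0 < wl -> 0 <= wu -> 0 < b -> 0 <= kp -> 0 <= D -> 0 <= d0 -> 0 <= y ->
  wl * D `^ b <= Num.max (kp ^+ q * (wu * d0 `^ b)) y ->
  D <= Num.max ((kp `^ b^-1) ^+ q * (wu / wl) `^ b^-1 * d0) ((wl^-1 * y) `^ b^-1).
Proof.
move=> wl0 wu0 b0 kp0 D0 d00 y0 D_le.
have wlV0 : 0 < wl^-1 by rewrite invr_gt0.
have bV0 : 0 < b^-1 by rewrite invr_gt0.
have rootK : classK (fun z => (wl^-1 * z) `^ b^-1).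
  exact: classK_comp (classK_powR bV0) (classK_scale wlV0 classK_id).
have powRK (z : R) : 0 <= z -> (z `^ b) `^ b^-1 = z.
  by move=> z0; rewrite -powRrM mulfV ?gt_eqF // powRr1.
have kq0 : 0 <= kp ^+ q := exprn_ge0 q kp0.
have wuwl0 : 0 <= wu / wl by rewrite divr_ge0 // ltW.
rewrite -[X in X <= _](powRK D D0) -[D `^ b](mulKf (lt0r_neq0 wl0)).
apply: le_trans (classK_le rootK (mulr_ge0 (ltW wl0) (powR_ge0 _ _)) D_le) _.
rewrite (classK_max rootK) ?mulr_ge0 ?powR_ge0 //; apply: le_max2 => //.
have powRX : (kp ^+ q) `^ b^-1 = (kp `^ b^-1) ^+ q.
  by rewrite -powR_mulrn // powRAC powR_mulrn // powR_ge0.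
rewrite (_ : wl^-1 * _ = kp ^+ q * (wu / wl) * d0 `^ b); last by ring.
by rewrite powRM ?powR_ge0 ?(mulr_ge0 kq0 wuwl0) // powRK // powRM // powRX.
Qed.

Lemma eISS_bound_of_blocks {L P rho d0 G K D : R} {M q k : nat} :
  0 <= L -> 0 < rho <= 1 -> 0 <= P -> 0 <= d0 -> 0 <= G -> 0 <= K -> (k <= q.+1 * M)%N ->
  D <= L * (Num.max (rho ^+ (q * M) * P * d0) G + K) ->
  D <= Num.max (Num.max 1 (2 * L * P / rho ^+ M) * rho ^+ k * d0) (2 * L * (G + K)).
Proof.
move=> L0 /andP[rho0 rho1] P0 d00 G0 K0 kqM D_le.
have rhoX0 n : 0 <= rho ^+ n by rewrite exprn_ge0 // ltW.
set Z := rho ^+ (q * M) * P * d0.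
apply: (le_trans D_le); apply: le_trans (ler_wpM2l L0 (maxD_le_max2 Z G0 K0)) _.
rewrite maxr_pMr //; apply: le_max2; last by rewrite mulrA [L * 2]mulrC.
rewrite (_ : L * (2 * Z) = 2 * L * P / rho ^+ M * rho ^+ (q.+1 * M) * d0).
  apply: ler_wpM2r => //; apply: ler_pM; rewrite ?rhoX0 ?le_max ?lexx ?orbT //.
    by rewrite divr_ge0 ?mulr_ge0.
  by apply: (ler_wiXn2l (ltW rho0) rho1).
by rewrite /Z mulSn exprD; field; rewrite expf_neq0 // lt0r_neq0.
Qed.

End RealBounds.

Lemma is_norm_ge0 {R : realType} {m} (N : 'rV[R]_m -> R) : is_norm N -> forall x, 0 <= N x.
Proof.
case=> _ normZ normD x.
have N0 : N 0 = 0 by have := normZ 0 x; rewrite scale0r normr0 mul0r.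
by have := normD x ((-1) *: x); rewrite normZ scaleN1r subrr N0 normrN normr1 mul1r; lra.
Qed.

Lemma sup_range_ge0 {R : realType} (F : nat -> R) :
  (forall i, 0 <= F i) -> 0 <= sup (range F).
Proof.
move=> F0; have [Fub|Fnub] := pselect (has_ubound (range F)).
  by apply: le_trans (F0 0%N) _; apply: (ub_le_sup Fub); exists 0%N.
by rewrite sup_out // => -[].
Qed.

Section Network.
Context {R : realType} {S : network R}.
Hypothesis ok : network_ok S.
Implicit Types (x xi : XE S) (u : nat -> UE S).

Lemma supX_ge0 x : 0 <= supX x.
Proof. by apply: sup_range_ge0 => i; have [_ [/is_norm_ge0 -> _] _ _ _] := ok i. Qed.

Lemma supU_ge0 (v : UE S) : 0 <= supU v.
Proof. by apply: sup_range_ge0 => i; have [_ [_ /is_norm_ge0 ->] _ _ _] := ok i. Qed.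

Lemma distA_ge0 {A : set (XE S)} {x} : A !=set0 -> 0 <= distA A x.
Proof.
move=> [y Ay]; apply: lb_le_inf; first by exists (supX (subX x y)), y.
by move=> _ [z _ <-]; apply: supX_ge0.
Qed.

Lemma supU_le_normUseq {u} k : inUseq u -> supU (u k) <= normUseq u.
Proof.
by move=> [_ [M uM]]; apply: ub_le_sup; [exists M => _ [j _ <-] | exists k].
Qed.

Lemma normUseq_ge0 {u} : inUseq u -> 0 <= normUseq u.
Proof. by move=> uU; apply: le_trans (supU_ge0 (u 0%N)) (supU_le_normUseq 0%N uU). Qed.

Definition ushift u m : nat -> UE S := fun j => u (m + j)%N.

Lemma inUseq_shift {u} m : inUseq u -> inUseq (ushift u m).
Proof. by move=> [uU [M uM]]; split=> [k|]; [exact: uU | exists M => k; exact: uM]. Qed.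

Lemma normUseq_shift_le {u} m : inUseq u -> normUseq (ushift u m) <= normUseq u.
Proof.
move=> uU; apply: ge_sup; first by exists (supU (ushift u m 0%N)), 0%N.
by move=> _ [j _ <-]; exact: (supU_le_normUseq (m + j)%N uU).
Qed.

Lemma traj_add n m xi u : traj (n + m) xi u = traj n (traj m xi u) (ushift u m).
Proof. by elim: n => //= n ->; rewrite /ushift addnC. Qed.

Lemma traj_divn M k xi u :
  traj k xi u = traj (k %% M) (traj (k %/ M * M) xi u) (ushift u (k %/ M * M)).
Proof. by rewrite -traj_add addnC -divn_eq. Qed.

Lemma traj_inX {xi u} k : well_posed S -> inX xi -> inUseq u -> inX (traj k xi u).
Proof. by move=> wp xiX [uU _]; elim: k => //= k IHk; apply: wp. Qed.

Context {A : set (XE S)} {k1 k2 : R -> R}.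
Hypotheses (wp : well_posed S) (A0 : A !=set0) (k1K : classK k1) (k2K : classK k2)
  (kb : K_bounded A k1 k2).

Lemma distA_traj_succ {x u W} j : inX x -> inUseq u -> normUseq u <= W ->
  distA A (traj j.+1 x u) <= k1 (distA A (traj j x u)) + k2 W.
Proof.
move=> xX uU uW; apply: le_trans (kb _ _ (traj_inX j wp xX uU) (uU.1 j)) _.
by rewrite lerD2l; apply: classK_le k2K (supU_ge0 _) (le_trans (supU_le_normUseq j uU) uW).
Qed.

Lemma distA_traj_le_iter {M x u W r} : inX x -> inUseq u -> normUseq u <= W -> (r <= M)%N ->
  distA A (traj r x u) <= iter M (fun z => z + k1 z + k2 z) (Num.max (distA A x) W).
Proof.
move=> xX uU uW rM; have W0 := le_trans (normUseq_ge0 uU) uW.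
apply: le_trans (iter_bound_of_step (fun j => distA A (traj j x u)) k1K k2K W0
  (fun j => distA_ge0 A0) (fun j => distA_traj_succ j xX uU uW) r) _.
apply: iter_nondecreasing rM; rewrite ?le_max ?distA_ge0 //.
- exact: classK_add (classK_add classK_id k1K) k2K.
- by move=> s s0; have := classK_ge0 k1K s0; have := classK_ge0 k2K s0; lra.
Qed.

Lemma distA_traj_le_expn {c M x u W r} : (forall s, 0 <= s -> k1 s = c * s) -> 0 <= c ->
  inX x -> inUseq u -> normUseq u <= W -> (r <= M)%N ->
  distA A (traj r x u) <= (c + 1) ^+ M * (distA A x + k2 W).
Proof.
move=> k1_lin c0 xX uU uW rM; have W0 := le_trans (normUseq_ge0 uU) uW.
apply: le_trans (expn_bound_of_linear_step (fun j => distA A (traj j x u)) c0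
  (classK_ge0 k2K W0) (fun j => distA_ge0 A0) _ r) _.
  by move=> j; rewrite -k1_lin ?distA_ge0 //; apply: distA_traj_succ.
by apply: ler_wpM2r (ler_weXn2l _ rM); rewrite ?addr_ge0 ?distA_ge0 ?classK_ge0 //; lra.
Qed.

Lemma V_traj_mulM_le {V : XE S -> R} {M a g xi u} q :
  (forall x, inX x -> 0 <= V x) -> classK a -> (forall s, 0 <= s -> a s <= s) -> classK g ->
  (forall xi u, inX xi -> inUseq u ->
     V (traj M xi u) <= Num.max (a (V xi)) (g (normUseq u))) ->
  inX xi -> inUseq u ->
  V (traj (q * M) xi u) <= Num.max (iter q a (V xi)) (g (normUseq u)).
Proof.
move=> V_ge0 aK a_le gK V_decr xiX uU.
have gW0 := classK_ge0 gK (normUseq_ge0 uU).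
elim: q => [|q IHq]; first by rewrite mul0n le_max lexx.
rewrite mulSn traj_add.
have xqX := traj_inX (q * M) wp xiX uU; have uqU := inUseq_shift (q * M) uU.
apply: le_trans (V_decr _ _ xqX uqU) _.
apply: le_trans (le_max2 (classK_le aK (V_ge0 _ xqX) IHq)
  (classK_le gK (normUseq_ge0 uqU) (normUseq_shift_le _ uU))) _.
by rewrite classK_max ?iter_ge0 ?V_ge0 // -maxA (max_r (a_le _ gW0)).
Qed.

Lemma fs_ISS_LF_ISS {V} : fs_ISS_LF A V -> ISS A.
Proof.
move=> [_ [V_ge0 [M [wl [wu [a [g
  [M0 [wlK [wuK _]] [[aK _] a_lt] gK [V_sandwich V_decr]]]]]]]]].
have [h [hK h_wl]] := classKinf_inverse wlK.
have a_le := classK_le_id aK a_lt.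
pose Theta := iter M (fun z => z + k1 z + k2 z).
have ThetaK : classK Theta.
  exact: classK_iter _ (classK_add (classK_add classK_id k1K) k2K).
exists (fun r t => Theta (h (iter (Num.truncn t %/ M) a (wu r)))),
       (fun w => Theta (h (g w)) + Theta w).
split; first exact: classKL_iter_floor (classK_comp ThetaK hK) aK a_lt wuK.
split; first exact: classK_add (classK_comp (classK_comp ThetaK hK) gK) ThetaK.
move=> xi u k xiX uU; set W := normUseq u; set d0 := distA A xi.
have W0 : 0 <= W := normUseq_ge0 uU.
rewrite natrK (traj_divn M); set q := (k %/ M)%N; set r := (k %% M)%N.
have rM : (r <= M)%N by rewrite ltnW // ltn_mod.
have xqX := traj_inX (q * M) wp xiX uU.
have P0 : 0 <= iter q a (wu d0) := iter_ge0 q aK (classK_ge0 wuK (distA_ge0 A0)).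
have gW0 : 0 <= g W := classK_ge0 gK W0.
have V_xq : V (traj (q * M) xi u) <= Num.max (iter q a (wu d0)) (g W).
  apply: le_trans (V_traj_mulM_le q V_ge0 aK a_le gK V_decr xiX uU) _.
  apply: le_max2 => //; apply: classK_le (classK_iter q aK) (V_ge0 _ xiX) _.
  by have /andP[] := V_sandwich _ xiX.
have d_xq : distA A (traj (q * M) xi u) <= Num.max (h (iter q a (wu d0))) (h (g W)).
  rewrite -classK_max // -[X in X <= _](h_wl _ (distA_ge0 A0)) //.
  apply: classK_le hK (classK_ge0 wlK.1 (distA_ge0 A0)) _ => //.
  by have /andP[V_lo _] := V_sandwich _ xqX; apply: le_trans V_lo V_xq.
apply: le_trans (distA_traj_le_iter xqX (inUseq_shift _ uU) (normUseq_shift_le _ uU) rM) _.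
apply: le_trans (classK_le ThetaK _ (le_max2 d_xq (lexx W))) _.
  by rewrite le_max (distA_ge0 A0).
have hP0 := classK_ge0 hK P0; have hQ0 := classK_ge0 hK gW0.
have PQ0 : 0 <= Num.max (h (iter q a (wu d0))) (h (g W)) by rewrite le_max hP0.
rewrite (classK_max ThetaK PQ0 W0) (classK_max ThetaK hP0 hQ0).
exact: max_max_le_maxD (classK_ge0 ThetaK hQ0) (classK_ge0 ThetaK W0).
Qed.

Lemma distA_traj_mulM_le_root {V : XE S -> R} {M wl wu b kp g xi u} q :
  0 < wl -> 0 <= wu -> 0 < b -> 0 < kp <= 1 -> classK g ->
  (forall x, inX x -> 0 <= V x) ->
  (forall x, inX x -> wl * (distA A x) `^ b <= V x <= wu * (distA A x) `^ b) ->
  (forall xi u, inX xi -> inUseq u ->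
     V (traj M xi u) <= Num.max (kp * V xi) (g (normUseq u))) ->
  inX xi -> inUseq u ->
  distA A (traj (q * M) xi u) <=
    Num.max ((kp `^ b^-1) ^+ q * (wu / wl) `^ b^-1 * distA A xi)
            ((wl^-1 * g (normUseq u)) `^ b^-1).
Proof.
move=> wl0 wu0 b0 /andP[kp0 kp1] gK V_ge0 V_sandwich V_decr xiX uU.
apply: (le_root_max wl0 wu0 b0 (ltW kp0) (distA_ge0 A0) (distA_ge0 A0)
  (classK_ge0 gK (normUseq_ge0 uU))).
have /andP[V_lo _] := V_sandwich _ (traj_inX (q * M) wp xiX uU).
apply: le_trans V_lo _.
apply: le_trans (V_traj_mulM_le q V_ge0 (classK_scale kp0 classK_id) _ gK V_decr xiX uU) _.
  by move=> s s0; apply: ler_piMl.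
rewrite iter_mulr; apply: le_max2 => //; apply: ler_wpM2l; first by rewrite exprn_ge0 ?ltW.
by have /andP[] := V_sandwich _ xiX.
Qed.

Lemma fs_eISS_LF_eISS {c : R} {V} :
  (forall s, 0 <= s -> k1 s = c * s) -> fs_eISS_LF A V -> eISS A.
Proof.
move=> k1_lin [_ [V_ge0 [M [wl [wu [b [kap [g
  [M0 [wl0 [wu0 b0]] /andP[kap0 kap1] gK [V_sandwich V_decr]]]]]]]]]].
have c0 : 0 <= c by have := classK_ge0 k1K ler01; rewrite k1_lin ?mulr1.
(* A positive rate [kp >= kap] is needed: the steps inside a block are only
   controlled through [rho ^+ k] with [rho ^+ M = kp `^ b^-1]. *)
pose kp := (1 + kap) / 2.
have kp01 : 0 < kp < 1 by rewrite /kp; apply/andP; split; lra.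
have V_decr_kp xi u : inX xi -> inUseq u ->
    V (traj M xi u) <= Num.max (kp * V xi) (g (normUseq u)).
  move=> xiX uU; apply: le_trans (V_decr _ _ xiX uU) _.
  by apply: le_max2 => //; apply: ler_wpM2r; rewrite ?V_ge0 // /kp; lra.
have [rho /andP[rho0 rho1] rhoM] := exists_rate_root kp01 b0 M0.
pose L := (c + 1) ^+ M; have L0 : 0 <= L by rewrite exprn_ge0 //; lra.
exists (Num.max 1 (2 * L * (wu / wl) `^ b^-1 / rho ^+ M)), rho,
       (fun w => 2 * L * ((wl^-1 * g w) `^ b^-1 + k2 w)).
split; first by rewrite le_max lexx.
split; first by rewrite ltW.
split.
  have L20 : 0 < 2 * L by rewrite mulr_gt0 // exprn_gt0 //; lra.
  have [wlV0 bV0] : 0 < wl^-1 /\ 0 < b^-1 by rewrite !invr_gt0.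
  exact: classK_scale L20 (classK_add (classK_comp (classK_powR bV0)
    (classK_scale wlV0 gK)) k2K).
move=> xi u k xiX uU; set W := normUseq u.
have W0 : 0 <= W := normUseq_ge0 uU.
rewrite (traj_divn M); set q := (k %/ M)%N; set r := (k %% M)%N.
have rM : (r <= M)%N by rewrite ltnW // ltn_mod.
have xqX := traj_inX (q * M) wp xiX uU.
have rho_le1 : 0 < rho <= 1 by rewrite rho0 ltW.
apply: (eISS_bound_of_blocks L0 rho_le1 (powR_ge0 _ _) (distA_ge0 A0) (powR_ge0 _ _)
  (classK_ge0 k2K W0) (ltnW (ltn_ceil k M0))).
apply: le_trans (distA_traj_le_expn k1_lin c0 xqX (inUseq_shift _ uU)
  (normUseq_shift_le _ uU) rM) _.
rewrite ler_wpM2l // lerD2r [in rho ^+ _]mulnC exprM rhoM.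
have kp_le1 : 0 < kp <= 1 by case/andP: kp01 => -> /ltW.
exact: distA_traj_mulM_le_root (ltW wu0) b0 kp_le1 gK V_ge0 V_sandwich V_decr_kp xiX uU.
Qed.

End Network.

Theorem proposition2 (R : realType) (S : network R) (A : set (XE S))
    (k1 k2 : R -> R) :
  network_ok S -> well_posed S ->
  (A `<=` @inX R S) -> (A !=set0) -> closedX A ->
  classK k1 -> classK k2 -> K_bounded A k1 k2 ->
  ((exists V, fs_ISS_LF A V) -> ISS A) /\
  ((exists c : R, forall s, 0 <= s -> k1 s = c * s) ->
     (exists V, fs_eISS_LF A V) -> eISS A).
Proof.
move=> ok wp _ A0 _ k1K k2K kb; split=> [[V VLF]|[c k1_lin] [V VLF]].
- exact: (fs_ISS_LF_ISS ok wp A0 k1K k2K kb VLF).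
- exact: (fs_eISS_LF_eISS ok wp A0 k1K k2K kb k1_lin VLF).
Qed.
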